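(* Let $M$ be an arbitrarily divisible monoid, let $N$ be a finite monoid, and let $\varphi \colon M \to N$ be a monoid morphism. Then the image $\varphi(M)$ is an idempotent monoid, i.e. $\varphi(m)^2 = \varphi(m)$ for every $m \in M$.
   Context: A monoid $M$ is called arbitrarily divisible if for every $m \in M$ and every positive integer $k$ there exists $m_k \in M$ with $(m_k)^k = m$. A monoid morphism $\varphi\colon M\to N$ satisfies $\varphi(1_M)=1_N$ and $\varphi(m_1m_2)=\varphi(m_1)\varphi(m_2)$. A monoid is idempotent if every element $e$ satisfies $e^2=e$. *)

From mathcomp Require Import all_boot.
Set Implicit Arguments.
Unset Strict Implicit.
Unset Printing Implicit Defensive.

Definition is_monoid (T : Type) (mul : T -> T -> T) (one : T) : Prop :=
  (forall x y z, mul x (mul y z) = mul (mul x y) z) /\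
  (forall x, mul one x = x) /\ (forall x, mul x one = x).

Fixpoint mpow (T : Type) (mul : T -> T -> T) (one : T) (k : nat) (m : T) : T :=
  match k with
  | 0 => one
  | k'.+1 => mul m (mpow mul one k' m)
  end.

Definition arbitrarily_divisible (T : Type) (mul : T -> T -> T) (one : T) : Prop :=
  forall (m : T) (k : nat), 0 < k -> exists mk : T, mpow mul one k mk = m.

Definition is_monoid_morphism (M N : Type) (mulM : M -> M -> M) (oneM : M)
  (mulN : N -> N -> N) (oneN : N) (phi : M -> N) : Prop :=
  phi oneM = oneN /\ (forall m1 m2, phi (mulM m1 m2) = mulN (phi m1) (phi m2)).

From mathcomp Require Import all_boot.

Set Implicit Arguments.
Unset Strict Implicit.

(* In a finite monoid with n elements two of the powers x^0, ..., x^n coincide,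
   so the powers of x are eventually periodic from an exponent below n on, with
   a period at most n, hence dividing n!.  Thus x^(n!) * x^(n!) = x^(n! + n!)
   = x^(n!).
   An element m of an arbitrarily divisible monoid is an (n!)-th power r^(n!),
   so phi m = (phi r)^(n!) is idempotent. *)

Section MonoidPowers.

Variables (T : Type) (mul : T -> T -> T) (one : T).
Hypothesis mulA : forall x y z, mul x (mul y z) = mul (mul x y) z.
Hypothesis mul1 : forall x, mul one x = x.

Local Notation "x ^ k" := (mpow mul one k x).

Lemma mpowD (a b : nat) (x : T) : x ^ (a + b) = mul (x ^ a) (x ^ b).
Proof. by elim: a => [|a IHa] /=; rewrite ?mul1 // IHa mulA. Qed.

Lemma mpow_periodic (x : T) (i j : nat) : i <= j -> x ^ i = x ^ j ->
  forall a c, i <= a -> x ^ (a + c * (j - i)) = x ^ a.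
Proof.
move=> le_ij eq_ij a c le_ia.
have shift b : i <= b -> x ^ (b + (j - i)) = x ^ b.
  by move=> le_ib; rewrite -(subnK le_ib) -addnA (subnKC le_ij) !mpowD eq_ij.
elim: c => [|c IHc]; first by rewrite addn0.
by rewrite mulSn [_ - _ + _]addnC addnA shift ?IHc // (leq_trans le_ia) ?leq_addr.
Qed.

End MonoidPowers.

Lemma mpow_morph (M N : Type) (mulM : M -> M -> M) (oneM : M)
    (mulN : N -> N -> N) (oneN : N) (phi : M -> N) :
    is_monoid_morphism mulM oneM mulN oneN phi ->
  forall k r, phi (mpow mulM oneM k r) = mpow mulN oneN k (phi r).
Proof. by move=> [phi1 phiM] k r; elim: k => [|k IHk] //=; rewrite phiM IHk. Qed.

Section FiniteMonoid.

Variables (T : finType) (mul : T -> T -> T) (one : T).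
Hypothesis mulA : forall x y z, mul x (mul y z) = mul (mul x y) z.
Hypothesis mul1 : forall x, mul one x = x.

Local Notation "x ^ k" := (mpow mul one k x).

Lemma mpow_collide (x : T) : exists i j, i < j <= #|T| /\ x ^ i = x ^ j.
Proof.
pose f (k : 'I_#|T|.+1) := x ^ k.
have /injectivePn[a [b neq_ab eq_ab]] : ~~ injectiveb f.
  by apply/injectiveP => /leq_card; rewrite card_ord ltnn.
have lt_aT := ltn_ord a; have lt_bT := ltn_ord b.
case: (ltngtP a b) => [lt_ab | lt_ba | /val_inj eq_ab'].
- by exists a, b; rewrite lt_ab -ltnS.
- by exists b, a; rewrite lt_ba -ltnS.
- by rewrite eq_ab' eqxx in neq_ab.
Qed.

Lemma mpow_fact_idem (x : T) : mul (x ^ #|T|`!) (x ^ #|T|`!) = x ^ #|T|`!.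
Proof.
have [i [j [/andP[lt_ij le_jT] eq_ij]]] := mpow_collide x.
have dvd_period : j - i %| #|T|`!.
  by apply: dvdn_fact; rewrite subn_gt0 lt_ij (leq_trans (leq_subr _ _)).
have le_i_fact : i <= #|T|`!.
  exact: leq_trans (ltnW lt_ij) (leq_trans le_jT (fact_geq _)).
rewrite -mpowD // -{2}(divnK dvd_period).
exact: mpow_periodic (ltnW lt_ij) eq_ij _ _ le_i_fact.
Qed.

End FiniteMonoid.

Theorem proposition2
  (M : Type) (mulM : M -> M -> M) (oneM : M)
  (N : finType) (mulN : N -> N -> N) (oneN : N)
  (phi : M -> N) :
  is_monoid mulM oneM ->
  is_monoid mulN oneN ->
  arbitrarily_divisible mulM oneM ->
  is_monoid_morphism mulM oneM mulN oneN phi ->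
  forall m : M, mulN (phi m) (phi m) = phi m.
Proof.
move=> _ [mulA [mul1 _]] divM morph_phi m.
have [r <-] := divM m _ (fact_gt0 #|N|).
rewrite (mpow_morph morph_phi).
exact: (mpow_fact_idem mulA mul1).
Qed.
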